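(* Let $s\in(\frac12,1)$, $N\ge2$, and let $\Gamma_1,\Gamma_2,\Omega,U$, $L$ and $C^+$ be as in the context. Then $U(x+y)\ge U(x)$ for all $x\in\mathbb R^N$ and all $y\in C^+$.
   Context: Notation: $S^{N-1}$ unit sphere. $\phi\in C^{1,1}(x_0)$ means there are $p\in\mathbb R^N$, $M,\eta_0>0$ with $|\phi(x_0+x)-\phi(x_0)-p\cdot x|\le M|x|^2$ for $|x|<\eta_0$; $\nabla\phi(x_0):=p$. Infinity fractional Laplacian: if $\nabla\phi(x)\ne0$, $v=\nabla\phi(x)/|\nabla\phi(x)|$, $\Delta^s_\infty\phi(x)=\int_0^\infty\frac{\phi(x+\eta v)+\phi(x-\eta v)-2\phi(x)}{\eta^{1+2s}}d\eta$; if $\nabla\phi(x)=0$, $\Delta^s_\infty\phi(x)=\sup_{y\in S^{N-1}}\int_0^\infty\frac{\phi(x+\eta y)-\phi(x)}{\eta^{1+2s}}d\eta+\inf_{z\in S^{N-1}}\int_0^\infty\frac{\phi(x-\eta z)-\phi(x)}{\eta^{1+2s}}d\eta$. An upper semicontinuous $u$ is a subsolution at $x_0$ if whenever $r>0$, $\phi\in C^{1,1}(x_0)\cap C(\overline{B_r(x_0)})$, $\phi(x_0)=u(x_0)$, $\phi>u$ on $B_r(x_0)\setminus\{x_0\}$, the function $\tilde u$ equal to $\phi$ on $B_r(x_0)$ and $u$ elsewhere satisfies $\Delta^s_\infty\tilde u(x_0)\ge0$. Setting: $x=(x_1,\hat x)$, $\hat x\in\mathbb R^{N-1}$; $\Gamma_1,\Gamma_2:\mathbb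 R^{N-1}\to\mathbb R$ are $C^{1,1}$ with $0\le\Gamma_1\le\Gamma_2\le M$, $\Gamma_2-\Gamma_1\ge m$ for constants $M>m>0$, and $\sup_{\hat x}|\partial_k\Gamma_i|+|\partial_l\partial_k\Gamma_i|\le C_1$ for all $i,k,l$. $L$ is a common Lipschitz constant of $\Gamma_1,\Gamma_2$, $\theta=\operatorname{arccot}(L)\in(0,\pi/2)$, $C^+=\{x\ne0:\cos\theta<x\cdot e_1/|x|\le1\}$. $\Omega=\{\Gamma_1(\hat x)<x_1<\Gamma_2(\hat x)\}$, $\Omega^{c,-}=\{x_1\le\Gamma_1(\hat x)\}$, $\Omega^{c,+}=\{x_1\ge\Gamma_2(\hat x)\}$. $\mathcal F$ is the set of upper semicontinuous $u:\mathbb R^N\to\mathbb R$, continuous in $\Omega$, that are subsolutions at every point of $\Omega$ and satisfy $u\le0$ on $\Omega^{c,-}$, $u\le1$ on $\Omega\cup\Omega^{c,+}$; $U=\sup_{u\in\mathcal F}u$ pointwise. *)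

(* R^N is represented as 'rV[R]_n.+1 with N = n.+1. *)
From HB Require Import structures.
From mathcomp Require Import all_boot all_order all_algebra.
From mathcomp Require Import all_classical all_reals all_analysis.
Set Implicit Arguments. Unset Strict Implicit. Unset Printing Implicit Defensive.
Import Order.TTheory GRing.Theory Num.Theory.
Import numFieldNormedType.Exports.
Local Open Scope classical_set_scope.
Local Open Scope ring_scope.

Section Defs.
Context {R : realType}.

Definition dotv {m : nat} (x y : 'rV[R]_m) : R := \sum_(i < m) x ord0 i * y ord0 i.
Definition enorm {m : nat} (x : 'rV[R]_m) : R := Num.sqrt (dotv x x).
Definition usphere (m : nat) : set 'rV[R]_m := [set y | enorm y = 1].
Definition ecoord {m : nat} (k : 'I_m) : 'rV[R]_m := delta_mx ord0 k.

Context {n : nat}.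
Local Notation vec := 'rV[R]_n.+1.

Definition x1 (x : vec) : R := x ord0 ord0.
Definition xhat (x : vec) : 'rV[R]_n := \row_(i < n) x ord0 (lift ord0 i).

(* phi \in C^{1,1}(x0) with \nabla phi(x0) = p *)
Definition C11_at (phi : vec -> R) (x0 p : vec) : Prop :=
  exists M eta0 : R, 0 < M /\ 0 < eta0 /\
    forall x : vec, enorm x < eta0 ->
      `|phi (x0 + x) - phi x0 - dotv p x| <= M * enorm x ^+ 2.

Definition ray_int (s : R) (g : R -> R) : \bar R :=
  (\int[@lebesgue_measure R]_(e in [set e : R | (0 < e)%R]) (g e / powR e (1 + 2 * s))%:E)%E.

(* infinity fractional Laplacian of w at x, where p = \nabla w(x) *)
Definition inf_frac_lap (s : R) (w : vec -> R) (x p : vec) : \bar R :=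
  if p != 0 then
    let v := (enorm p)^-1 *: p in
    ray_int s (fun e => w (x + e *: v) + w (x - e *: v) - 2 * w x)
  else
    (ereal_sup [set ray_int s (fun e => (w (x + e *: y) - w x)%R) | y in (@usphere n.+1)]
     + ereal_inf [set ray_int s (fun e => (w (x - e *: z) - w x)%R) | z in (@usphere n.+1)])%E.

Definition usc (u : vec -> R) : Prop :=
  forall x (e : R), 0 < e -> exists d : R, 0 < d /\
    forall y, enorm (y - x) < d -> u y < u x + e.

Definition cont_on_cball (phi : vec -> R) (x0 : vec) (r : R) : Prop :=
  forall y, enorm (y - x0) <= r -> forall e : R, 0 < e -> exists d : R, 0 < d /\
    forall z, enorm (z - x0) <= r -> enorm (z - y) < d -> `|phi z - phi y| < e.

Definition glue (phi u : vec -> R) (x0 : vec) (r : R) : vec -> R :=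
  fun y => if enorm (y - x0) < r then phi y else u y.

Definition subsolution_at (s : R) (u : vec -> R) (x0 : vec) : Prop :=
  forall (r : R) (phi : vec -> R) (p : vec),
    0 < r -> C11_at phi x0 p -> cont_on_cball phi x0 r ->
    phi x0 = u x0 ->
    (forall y, enorm (y - x0) < r -> y != x0 -> phi y > u y) ->
    (0 <= inf_frac_lap s (glue phi u x0 r) x0 p)%E.

Definition Omega (G1 G2 : 'rV[R]_n -> R) : set vec :=
  [set x | G1 (xhat x) < x1 x < G2 (xhat x)].
Definition Omega_c_minus (G1 : 'rV[R]_n -> R) : set vec :=
  [set x | x1 x <= G1 (xhat x)].
Definition Omega_c_plus (G2 : 'rV[R]_n -> R) : set vec :=
  [set x | G2 (xhat x) <= x1 x].

Definition cont_in (D : set vec) (u : vec -> R) : Prop :=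
  forall x, D x -> forall e : R, 0 < e -> exists d : R, 0 < d /\
    forall y, D y -> enorm (y - x) < d -> `|u y - u x| < e.

Definition Fam (s : R) (G1 G2 : 'rV[R]_n -> R) : set (vec -> R) :=
  [set u | usc u /\ cont_in (Omega G1 G2) u /\
           (forall x, Omega G1 G2 x -> subsolution_at s u x) /\
           (forall x, Omega_c_minus G1 x -> u x <= 0) /\
           (forall x, Omega G1 G2 x \/ Omega_c_plus G2 x -> u x <= 1)].

Definition Usup (s : R) (G1 G2 : 'rV[R]_n -> R) (x : vec) : \bar R :=
  ereal_sup [set (u x)%:E | u in Fam s G1 G2].

(* C^+ with theta = arccot L = pi/2 - atan L *)
Definition Cplus (L : R) : set vec :=
  [set y | y != 0 /\ cos (pi / 2 - atan L) < x1 y / enorm y <= 1].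

Definition partials_bounded (G : 'rV[R]_n -> R) (C1 : R) : Prop :=
  forall (k l : 'I_n) (a : 'rV[R]_n),
    derivable G a (ecoord k) /\
    derivable (fun b => derive G b (ecoord k)) a (ecoord l) /\
    `|derive G a (ecoord k)| + `|derive (fun b => derive G b (ecoord k)) a (ecoord l)| <= C1.

Definition lipschitz_e (G : 'rV[R]_n -> R) (L : R) : Prop :=
  forall a b, `|G a - G b| <= L * enorm (a - b).

End Defs.

(* For u in F and y in C^+, the function w := max(u, u(. - y), 0) is again in F, so
   U(x + y) >= w(x + y) >= u(x).  Since y lies in the cone L |y^| < y_1, translating by -y
   strictly lowers x_1 - G(x^) for every L-Lipschitz G: hence Omega^{c,-} is stable under
   x |-> x - y, and a point of Omega whose translate leaves Omega lands in Omega^{c,-}, where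
   u <= 0.  So at each point of Omega, w either coincides with a subsolution lying below it
   (u, or the translate of u from a point of Omega) or attains its minimum 0; in both cases
   a test function touching w from above has nonnegative infinity fractional Laplacian. *)

From Pilot Require Import Defs.
From HB Require Import structures.
From mathcomp Require Import all_boot all_order all_algebra.
From mathcomp Require Import all_classical all_reals all_analysis.
From mathcomp Require Import lra.
Import Order.TTheory GRing.Theory Num.Theory.
Import numFieldNormedType.Exports.
Local Open Scope classical_set_scope.
Local Open Scope ring_scope.

Section Coordinates.
Context {R : realType} {n : nat}.
Local Notation vec := 'rV[R]_n.+1.

Lemma x1B (a b : vec) : x1 (a - b) = x1 a - x1 b.
Proof. by rewrite /x1 !mxE. Qed.

Lemma xhatB (a b : vec) : xhat (a - b) = xhat a - xhat b.
Proof. by apply/rowP => i; rewrite !mxE. Qed.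

Lemma dotv_ge0 {m} (c : 'rV[R]_m) : 0 <= dotv c c.
Proof. by apply: sumr_ge0 => i _; rewrite -expr2 sqr_ge0. Qed.

Lemma enorm_ge0 {m} (c : 'rV[R]_m) : 0 <= enorm c.
Proof. exact: sqrtr_ge0. Qed.

Lemma enorm0 {m} : enorm (0 : 'rV[R]_m) = 0.
Proof. by rewrite /enorm /dotv big1 ?sqrtr0 // => i _; rewrite mxE mulr0. Qed.

Lemma sqr_enorm {m} (c : 'rV[R]_m) : enorm c ^+ 2 = dotv c c.
Proof. by rewrite /enorm sqr_sqrtr // dotv_ge0. Qed.

Lemma dotv_x1_xhat (c : vec) : dotv c c = x1 c ^+ 2 + dotv (xhat c) (xhat c).
Proof.
rewrite /dotv big_ord_recl expr2; congr (_ + _).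
by apply: eq_bigr => i _; rewrite !mxE.
Qed.

Lemma sqr_enorm_x1_xhat (c : vec) : enorm c ^+ 2 = x1 c ^+ 2 + enorm (xhat c) ^+ 2.
Proof. by rewrite !sqr_enorm dotv_x1_xhat. Qed.

Lemma norm_x1_le_enorm (c : vec) : `|x1 c| <= enorm c.
Proof.
rewrite -(ler_pXn2r (isT : (0 < 2)%N)) ?nnegrE ?enorm_ge0 //.
by rewrite real_normK ?num_real // sqr_enorm_x1_xhat lerDl sqr_ge0.
Qed.

Lemma enorm_xhat_le (c : vec) : enorm (xhat c) <= enorm c.
Proof.
rewrite -(ler_pXn2r (isT : (0 < 2)%N)) ?nnegrE ?enorm_ge0 //.
by rewrite sqr_enorm_x1_xhat lerDr sqr_ge0.
Qed.

Lemma sin_arccot (L : R) : cos (pi / 2 - atan L) = L / Num.sqrt (1 + L ^+ 2).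
Proof.
rewrite -opprB cosN cosBpihalf.
have cos_atan_neq0 : cos (atan L) != 0.
  by rewrite cos_atan invr_eq0 gt_eqF // sqrtr_gt0 ltr_pwDl // sqr_ge0.
by rewrite -[sin _](divfK cos_atan_neq0) -/(tan _) atanK cos_atan.
Qed.

Lemma Cplus_x1_gt {L : R} {y : vec} : 0 <= L -> Cplus L y -> L * enorm (xhat y) < x1 y.
Proof.
move=> L_ge0 [_ /andP[]]; rewrite sin_arccot => cone_y _.
have c_gt0 : 0 < Num.sqrt (1 + L ^+ 2) by rewrite sqrtr_gt0 ltr_pwDl // sqr_ge0.
have y_gt0 : 0 < enorm y.
  rewrite lt_neqAle enorm_ge0 andbT; apply/eqP => y0.
  by move: cone_y; rewrite -y0 invr0 mulr0 ltNge divr_ge0 // ltW.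
move: cone_y; rewrite ltr_pdivrMr // mulrAC ltr_pdivlMr //.
set c := Num.sqrt _ => LyN.
have c2 : c ^+ 2 = 1 + L ^+ 2 by rewrite sqr_sqrtr // addr_ge0 // sqr_ge0.
have LN_ge0 : 0 <= L * enorm y by rewrite mulr_ge0 // enorm_ge0.
have : (L * enorm y) ^+ 2 < (x1 y * c) ^+ 2
  by rewrite (ltr_pXn2r (isT : (0 < 2)%N)) ?nnegrE // (le_trans LN_ge0) // ltW.
rewrite !exprMn c2 sqr_enorm_x1_xhat => sqr_lt.
have x1_gt0 : 0 < x1 y by rewrite -(pmulr_lgt0 _ c_gt0); exact: le_lt_trans LyN.
have := enorm_ge0 (xhat y); nra.
Qed.
End Coordinates.

Section LipschitzGraphs.
Context {R : realType} {n : nat} {G1 G2 : 'rV[R]_n -> R} {L : R} {y : 'rV[R]_n.+1}.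
Hypotheses (L_ge0 : 0 <= L) (lipG1 : lipschitz_e G1 L) (lipG2 : lipschitz_e G2 L).
Hypothesis y_cone : L * enorm (xhat y) < x1 y.

Lemma lipschitz_xhat_dist {G : 'rV[R]_n -> R} (a b : 'rV[R]_n.+1) :
  lipschitz_e G L -> `|G (xhat b) - G (xhat a)| <= L * enorm (b - a).
Proof.
move=> lipG; apply: (le_trans (lipG _ _)).
by rewrite ler_wpM2l // -xhatB enorm_xhat_le.
Qed.

Lemma x1_subG_shift_lt {G : 'rV[R]_n -> R} (z : 'rV[R]_n.+1) :
  lipschitz_e G L -> x1 (z - y) - G (xhat (z - y)) < x1 z - G (xhat z).
Proof.
move=> lipG; have := lipG (xhat z) (xhat (z - y)).
rewrite x1B !xhatB opprB addrCA subrr addr0 => /ler_normlP[_ h].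
have := le_lt_trans h y_cone; lra.
Qed.

Lemma Omega_c_minus_shift (z : 'rV[R]_n.+1) :
  Omega_c_minus G1 z -> Omega_c_minus G1 (z - y).
Proof. by rewrite /Omega_c_minus /= => ?; have := x1_subG_shift_lt z lipG1; lra. Qed.

Lemma Omega_shift_out (z : 'rV[R]_n.+1) :
  Omega G1 G2 z -> ~ Omega G1 G2 (z - y) -> Omega_c_minus G1 (z - y).
Proof.
move=> /andP[_ z_below] zy_out.
rewrite /Omega_c_minus /= leNgt; apply/negP => zy_above.
by apply: zy_out; rewrite /Omega /= zy_above /=; have := x1_subG_shift_lt z lipG2; lra.
Qed.

Lemma Omega_open (a : 'rV[R]_n.+1) : Omega G1 G2 a ->
  exists d, 0 < d /\ forall b, enorm (b - a) < d -> Omega G1 G2 b.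
Proof.
move=> /andP[a_above a_below].
exists (Num.min (x1 a - G1 (xhat a)) (G2 (xhat a) - x1 a) / (1 + L)); split.
  by rewrite divr_gt0 ?ltr_pwDl // lt_min !subr_gt0 a_above a_below.
move=> b; rewrite ltr_pdivlMr ?ltr_pwDl // lt_min => /andP[near1 near2].
have := norm_x1_le_enorm (b - a); rewrite x1B => /ler_normlP[? ?].
have /ler_normlP[? ?] := lipschitz_xhat_dist a b lipG1.
have /ler_normlP[? ?] := lipschitz_xhat_dist a b lipG2.
have k_ge0 := enorm_ge0 (b - a).
by rewrite /Omega /=; apply/andP; split; nra.
Qed.

End LipschitzGraphs.

(* Unlike [le_integral], no measurability or integrability is assumed: the integral is a
   difference of suprema over simple minorants, each monotone in the integrand. *)
Lemma le_integral_pointwise d (T : measurableType d) (R : realType)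
    (mu : {measure set T -> \bar R}) (D : set T) (f g : T -> \bar R) :
  (forall x, (f x <= g x)%E) -> (\int[mu]_(x in D) f x <= \int[mu]_(x in D) g x)%E.
Proof.
move=> fg; have fgD x : ((f \_ D) x <= (g \_ D) x)%E by rewrite /patch; case: ifP.
rewrite /integral; apply: leeD; last rewrite leeN2;
  apply: ge_ereal_sup => _ [h /= h_le <-]; apply: ereal_sup_ubound;
  exists h => //= x; apply: (le_trans (h_le x)).
- by apply: (@funepos_le _ _ setT); rewrite ?in_setT.
- by apply: (@funeneg_le _ _ setT); rewrite ?in_setT.
Qed.

Section InfinityFractionalLaplacian.
Context {R : realType} {n : nat}.
Local Notation vec := 'rV[R]_n.+1.
Variable s : R.

Lemma ray_int_le (g1 g2 : R -> R) :
  (forall e, g1 e <= g2 e) -> (ray_int s g1 <= ray_int s g2)%E.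
Proof.
move=> g12; apply: le_integral_pointwise => e; rewrite lee_fin.
by rewrite ler_wpM2r // invr_ge0 powR_ge0.
Qed.

Lemma ray_int_ge0 (g : R -> R) : (forall e, 0 <= g e) -> (0 <= ray_int s g)%E.
Proof.
move=> g_ge0; apply: integral_ge0 => e _.
by rewrite lee_fin divr_ge0 ?powR_ge0.
Qed.

Lemma usphere_ecoord (k : 'I_n.+1) : usphere (ecoord k : vec).
Proof.
rewrite /usphere /= /enorm /dotv (bigD1 k) //= big1 ?addr0.
  by rewrite /ecoord !mxE !eqxx mulr1 sqrtr1.
by move=> i /negbTE ik; rewrite /ecoord !mxE ik andbF mulr0.
Qed.

Lemma inf_frac_lap_le (w1 w2 : vec -> R) (x p : vec) :
  (forall q, w1 q <= w2 q) -> w1 x = w2 x ->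
  (inf_frac_lap s w1 x p <= inf_frac_lap s w2 x p)%E.
Proof.
move=> w12 w12x; rewrite /inf_frac_lap w12x; case: ifP => _.
  by apply: ray_int_le => e; apply: lerB => //; apply: lerD.
apply: leeD.
  apply: ge_ereal_sup => _ [v v_unit <-].
  apply: (@le_trans _ _ (ray_int s (fun e => w2 (x + e *: v) - w2 x))).
    by apply: ray_int_le => e; apply: lerB.
  by apply: ereal_sup_ubound; exists v.
apply: le_ereal_inf_tmp => _ [v v_unit <-].
apply: (@le_trans _ _ (ray_int s (fun e => w1 (x - e *: v) - w2 x))).
  by apply: ereal_inf_lbound; exists v.
by apply: ray_int_le => e; apply: lerB.
Qed.

Lemma inf_frac_lap_translate (w : vec -> R) (x y p : vec) :
  inf_frac_lap s (fun q => w (q + y)) (x - y) p = inf_frac_lap s w x p.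
Proof.
have shift a : x - y + a + y = x + a by rewrite addrAC subrK.
rewrite /inf_frac_lap subrK; case: ifP => _.
  by congr (ray_int _ _); apply: funext => e /=; rewrite !shift.
by congr (ereal_sup _ + ereal_inf _)%E; apply: eq_imagel => v _;
  congr (ray_int _ _); apply: funext => e; rewrite shift.
Qed.

Lemma inf_frac_lap_ge0_at_min (w : vec -> R) (x p : vec) :
  (forall q, w x <= w q) -> (0 <= inf_frac_lap s w x p)%E.
Proof.
move=> x_min; rewrite /inf_frac_lap; case: ifP => _.
  by apply: ray_int_ge0 => e; rewrite mulr2n mulrDl mul1r subr_ge0 lerD.
apply: adde_ge0; last first.
  by apply: le_ereal_inf_tmp => _ [v _ <-]; apply: ray_int_ge0 => e; rewrite subr_ge0.
apply: (@le_trans _ _ (ray_int s (fun e => w (x + e *: ecoord ord0) - w x))).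
  by apply: ray_int_ge0 => e; rewrite subr_ge0.
by apply: ereal_sup_ubound; exists (ecoord ord0); first exact: usphere_ecoord.
Qed.

End InfinityFractionalLaplacian.

Lemma subrBB {V : zmodType} (q x y : V) : (q - y) - (x - y) = q - x.
Proof. by rewrite opprB addrA subrK. Qed.

Lemma dist_max_lt (R : realDomainType) (a b c d e : R) :
  `|a - c| < e -> `|b - d| < e -> `|Num.max a b - Num.max c d| < e.
Proof.
rewrite !ltr_distl => /andP[? ?] /andP[? ?].
by case: (leP a b) => ?; case: (leP c d) => ?; apply/andP; split; lra.
Qed.

Section SemiContinuity.
Context {R : realType} {n : nat}.
Local Notation vec := 'rV[R]_n.+1.

Lemma usc_cst (c : R) : usc (fun _ : vec => c).
Proof. by move=> x e e_gt0; exists 1; split => // q _; rewrite ltrDl. Qed.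

Lemma usc_translate (u : vec -> R) (y : vec) : usc u -> usc (fun q => u (q - y)).
Proof.
move=> u_usc x e e_gt0; have [d [d_gt0 near_u]] := u_usc (x - y) e e_gt0.
by exists d; split => // q qx; apply: near_u; rewrite subrBB.
Qed.

Lemma usc_max (u v : vec -> R) : usc u -> usc v -> usc (fun q => Num.max (u q) (v q)).
Proof.
move=> u_usc v_usc x e e_gt0.
have [d1 [d1_gt0 near_u]] := u_usc x e e_gt0.
have [d2 [d2_gt0 near_v]] := v_usc x e e_gt0.
exists (Num.min d1 d2); split; first by rewrite lt_min d1_gt0 d2_gt0.
move=> q; rewrite lt_min => /andP[/near_u ? /near_v ?].
by case: (leP (u q) (v q)) => ?; case: (leP (u x) (v x)) => ?; lra.
Qed.

Lemma cont_in_max (D : set vec) (u v : vec -> R) :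
  cont_in D u -> cont_in D v -> cont_in D (fun q => Num.max (u q) (v q)).
Proof.
move=> u_cont v_cont x Dx e e_gt0.
have [d1 [d1_gt0 near_u]] := u_cont x Dx e e_gt0.
have [d2 [d2_gt0 near_v]] := v_cont x Dx e e_gt0.
exists (Num.min d1 d2); split; first by rewrite lt_min d1_gt0 d2_gt0.
move=> q Dq; rewrite lt_min => /andP[? ?].
by apply: dist_max_lt; [apply: near_u | apply: near_v].
Qed.

End SemiContinuity.

Section Subsolutions.
Context {R : realType} {n : nat}.
Local Notation vec := 'rV[R]_n.+1.
Context {s : R}.

Lemma glue_center (phi u : vec -> R) (x : vec) (r : R) :
  0 < r -> Defs.glue phi u x r x = phi x.
Proof. by move=> r_gt0; rewrite /Defs.glue subrr enorm0 r_gt0. Qed.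

Lemma glue_le (phi u v : vec -> R) (x : vec) (r : R) :
  (forall q, u q <= v q) -> forall q, Defs.glue phi u x r q <= Defs.glue phi v x r q.
Proof. by move=> uv q; rewrite /Defs.glue; case: ifP. Qed.

Lemma subsolution_at_min (w : vec -> R) (x : vec) :
  (forall q, w x <= w q) -> subsolution_at s w x.
Proof.
move=> x_min r phi p r_gt0 _ _ phix phi_gt; apply: inf_frac_lap_ge0_at_min => q.
rewrite glue_center // phix /Defs.glue; case: ifP => // qx.
have [->|qnx] := eqVneq q x; first by rewrite phix.
exact: le_trans (x_min q) (ltW (phi_gt q qx qnx)).
Qed.

(* A test function touching [w] from above at [x] also touches [v] there. *)
Lemma subsolution_at_le {v w : vec -> R} {x : vec} :
  (forall q, v q <= w q) -> v x = w x -> subsolution_at s v x -> subsolution_at s w x.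
Proof.
move=> vw vwx v_sub r phi p r_gt0 phiC phic phix phi_gt.
apply: le_trans (v_sub r phi p r_gt0 phiC phic _ _) _.
- by rewrite phix vwx.
- by move=> q qx qnx; apply: le_lt_trans (vw q) (phi_gt q qx qnx).
- by apply: inf_frac_lap_le; [exact: glue_le | rewrite !glue_center].
Qed.

Lemma subsolution_at_translate {u : vec -> R} {x y : vec} :
  subsolution_at s u (x - y) -> subsolution_at s (fun q => u (q - y)) x.
Proof.
move=> u_sub r phi p r_gt0 [M [eta [M_gt0 [eta_gt0 phiC]]]] phic phix phi_gt.
pose psi q := phi (q + y).
have shift_dist q : q + y - x = q - (x - y) by rewrite opprB addrA.
have shift_diff q z : z + y - (q + y) = z - q by rewrite [q + y]addrC addrKA.
have glue_psi : Defs.glue psi u (x - y) r =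
    fun q => Defs.glue phi (fun q => u (q - y)) x r (q + y).
  by apply: funext => q; rewrite /Defs.glue /psi addrK shift_dist.
rewrite -(inf_frac_lap_translate s _ x y) -glue_psi.
apply: u_sub => //.
- exists M, eta; split => //; split => // q q_small.
  have -> : psi (x - y + q) = phi (x + q) by rewrite /psi addrAC subrK.
  by rewrite /psi subrK; apply: phiC.
- move=> q qxy e e_gt0; rewrite -shift_dist in qxy.
  have [d [d_gt0 near_phi]] := phic (q + y) qxy e e_gt0.
  exists d; split => // z zxy zq; apply: near_phi; by rewrite ?shift_dist ?shift_diff.
- by rewrite /psi subrK phix.
- move=> q qxy qnxy; rewrite -[q in u q](addrK y); apply: phi_gt.
    by rewrite shift_dist.
  by apply: contraNneq qnxy => <-; rewrite addrK.
Qed.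

End Subsolutions.

Definition max_translate0 {R : realType} {n : nat}
    (u : 'rV[R]_n.+1 -> R) (y : 'rV[R]_n.+1) : 'rV[R]_n.+1 -> R :=
  fun q => Num.max (u q) (Num.max (u (q - y)) 0).

Section TranslatedSubsolutions.
Context {R : realType} {n : nat}.
Local Notation vec := 'rV[R]_n.+1.
Context {s : R} {G1 G2 : 'rV[R]_n -> R} {L : R} {y : vec}.
Hypotheses (L_ge0 : 0 <= L) (lipG1 : lipschitz_e G1 L) (lipG2 : lipschitz_e G2 L).
Hypothesis y_cone : L * enorm (xhat y) < x1 y.

Lemma Fam_le1 (u : vec -> R) (q : vec) : Fam s G1 G2 u -> u q <= 1.
Proof.
move=> [_ [_ [_ [u_le0 u_le1]]]].
have [q_low|q_high] := leP (x1 q) (G1 (xhat q)).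
  exact: le_trans (u_le0 q q_low) _.
apply: u_le1; have [q_below|q_above] := ltP (x1 q) (G2 (xhat q)).
  by left; rewrite /Omega /= q_high q_below.
by right.
Qed.

Lemma cont_in_translate_max0 (u : vec -> R) :
  usc u -> cont_in (Omega G1 G2) u -> (forall x, Omega_c_minus G1 x -> u x <= 0) ->
  cont_in (Omega G1 G2) (fun q => Num.max (u (q - y)) 0).
Proof.
move=> u_usc u_cont u_le0 z Dz e e_gt0.
have [zy_in|zy_out] := pselect (Omega G1 G2 (z - y)).
  have [d1 [d1_gt0 ball_in]] := Omega_open L_ge0 lipG1 lipG2 _ zy_in.
  have [d2 [d2_gt0 near_u]] := u_cont (z - y) zy_in e e_gt0.
  exists (Num.min d1 d2); split; first by rewrite lt_min d1_gt0 d2_gt0.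
  move=> q Dq; rewrite lt_min -(subrBB q z y) => /andP[? ?].
  by apply: dist_max_lt; [apply: near_u => //; apply: ball_in | rewrite subrr normr0].
have uzy_le0 := u_le0 _ (Omega_shift_out lipG2 y_cone _ Dz zy_out).
have [d [d_gt0 near_u]] := u_usc (z - y) e e_gt0.
exists d; split => // q Dq qz; have := near_u (q - y); rewrite subrBB => /(_ qz) ?.
by rewrite ltr_distl; case: (leP (u (q - y)) 0) => ?; rewrite (max_r uzy_le0); lra.
Qed.

Lemma subsolution_at_translate_max0 (u : vec -> R) (z : vec) :
  Fam s G1 G2 u -> Omega G1 G2 z -> subsolution_at s (max_translate0 u y) z.
Proof.
move=> [_ [_ [u_sub [u_le0 _]]]] Dz; set w := max_translate0 u y.
have u_le_w q : u q <= w q by rewrite /w /max_translate0 le_max lexx.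
have uy_le_w q : u (q - y) <= w q by rewrite /w /max_translate0 !le_max lexx orbT.
have w_ge0 q : 0 <= w q by rewrite /w /max_translate0 !le_max lexx !orbT.
have w_min : w z <= 0 -> subsolution_at s w z.
  by move=> wz_le0; apply: subsolution_at_min => q; exact: le_trans wz_le0 (w_ge0 q).
have [wz_u|wz_uy|wz_0] : [\/ w z = u z, w z = u (z - y) | w z = 0].
- rewrite /w /max_translate0; case: (leP (u (z - y)) 0) => _; case: leP => _;
    by [apply: Or31 | apply: Or32 | apply: Or33].
- exact: subsolution_at_le u_le_w (esym wz_u) (u_sub z Dz).
- have [zy_in|zy_out] := pselect (Omega G1 G2 (z - y)).
    apply: subsolution_at_le uy_le_w (esym wz_uy) _.
    exact: subsolution_at_translate (u_sub _ zy_in).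
  by apply: w_min; rewrite wz_uy; exact: u_le0 (Omega_shift_out lipG2 y_cone _ Dz zy_out).
- by apply: w_min; rewrite wz_0.
Qed.

Lemma Fam_translate_max0 (u : vec -> R) :
  Fam s G1 G2 u -> Fam s G1 G2 (max_translate0 u y).
Proof.
move=> uF; have [u_usc [u_cont [_ [u_le0 _]]]] := uF.
split.
  by apply: usc_max => //; apply: usc_max; [exact: usc_translate | exact: usc_cst].
split; first by apply: cont_in_max => //; exact: cont_in_translate_max0.
split; first by move=> z Dz; exact: subsolution_at_translate_max0.
split=> z z_low; rewrite /max_translate0 !ge_max.
  by rewrite !u_le0 ?lexx //; exact: Omega_c_minus_shift.
by rewrite !Fam_le1 ?ler01.
Qed.

End TranslatedSubsolutions.

Theorem proposition4p3 (R : realType) (n : nat) (s : R)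
    (G1 G2 : 'rV[R]_n -> R) (M m C1 L : R) :
  (1 <= n)%N ->
  1 / 2 < s < 1 ->
  0 < m -> m < M ->
  (forall a, 0 <= G1 a) -> (forall a, G1 a <= G2 a) -> (forall a, G2 a <= M) ->
  (forall a, m <= G2 a - G1 a) ->
  partials_bounded G1 C1 -> partials_bounded G2 C1 ->
  0 < L -> lipschitz_e G1 L -> lipschitz_e G2 L ->
  forall (x y : 'rV[R]_n.+1), Cplus L y ->
    (Usup s G1 G2 x <= Usup s G1 G2 (x + y))%E.
Proof.
move=> _ _ _ _ _ _ _ _ _ _ /ltW L_ge0 lipG1 lipG2 x y y_Cplus.
have y_cone := Cplus_x1_gt L_ge0 y_Cplus.
apply: ge_ereal_sup => _ [u uF <-].
apply: (@le_trans _ _ (max_translate0 u y (x + y))%:E).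
  by rewrite lee_fin /max_translate0 addrK !le_max lexx !orbT.
apply: ereal_sup_ubound; exists (max_translate0 u y) => //.
exact: Fam_translate_max0 L_ge0 lipG1 lipG2 y_cone _ uF.
Qed.
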